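(* Let $d\ge1$ and let $\{e_j\}_{j=1}^d$ be an orthonormal basis of $\mathbb C^d$. There is a map $F:\mathbb R^{3d-2}\to\mathbb C^d$ (depending on the basis) such that for every $x\in\mathbb C^d$ which is full with respect to $\{e_j\}_{j=1}^d$, $$F\big(\mathcal A_{\{e_j\}}(x)\big)=\frac{\langle e_1,x\rangle}{|\langle e_1,x\rangle|}\,x .$$ That is, the vector $y=\frac{\langle e_1,x\rangle}{|\langle e_1,x\rangle|}x$ is determined by the values $\mathcal A_{\{e_j\}}(x)$.
   Context: $\mathbb C^d$ carries the standard inner product $\langle u,v\rangle=\sum_k u_k\overline{v_k}$. A vector $x$ is called full with respect to a basis $\{e_j\}_{j=1}^d$ if $\langle x,e_j\rangle\ne0$ for all $j$. The measurement vectors are $f_j=e_j$ for $1\le j\le d$, $f_j=e_{j-d}-e_{j-d+1}$ for $d+1\le j\le 2d-1$, and $f_j=e_{j-(2d-1)}-ie_{j-(2d-1)+1}$ for $2d\le j\le 3d-2$; the magnitude measurement map is $\mathcal A_{\{e_j\}}(x)=(|\langle x,f_j\rangle|^2)_{j=1}^{3d-2}\in\mathbb R^{3d-2}$. *)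

From HB Require Import structures.
From mathcomp Require Import all_boot all_order all_algebra.
From mathcomp Require Import complex.
From mathcomp Require Import reals.
Set Implicit Arguments.
Unset Strict Implicit.
Unset Printing Implicit Defensive.
Import Order.TTheory GRing.Theory Num.Theory.
Local Open Scope ring_scope.

Definition cinner (R : rcfType) (d : nat) (u v : 'cV[R[i]]_d) : R[i] :=
  \sum_(k < d) u k 0 * (v k 0)^*.

Definition full (R : rcfType) (d : nat) (e : 'I_d -> 'cV[R[i]]_d) (x : 'cV[R[i]]_d) :=
  forall j, cinner x (e j) != 0.

(* orthonormal basis (d orthonormal vectors in C^d form a basis) *)
Definition orthonormal_basis (R : rcfType) (d : nat) (e : 'I_d -> 'cV[R[i]]_d) :=
  forall j k, cinner (e j) (e k) = (j == k)%:R.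

(* measurement vectors f_1..f_{3d-2}, 0-indexed: index m < 3d-2.
   m < d            : e_{m}
   d <= m < 2d-1    : e_{m-d} - e_{m-d+1}
   2d-1 <= m        : e_{m-(2d-1)} - i e_{m-(2d-1)+1}  *)
Definition meas_vec (R : rcfType) (d : nat) (e : 'I_d -> 'cV[R[i]]_d)
  (m : 'I_(3 * d - 2)) : 'cV[R[i]]_d :=
  let E := fun n : nat => if insub n is Some j then e j else 0 in
  if (m < d)%N then E m
  else if (m < 2 * d - 1)%N then E (m - d)%N - E (m - d).+1
  else E (m - (2 * d - 1))%N - 'i *: E (m - (2 * d - 1)).+1.

Definition sqmod (R : rcfType) (z : R[i]) : R := complex.Re z ^+ 2 + complex.Im z ^+ 2.

Definition meas_map (R : rcfType) (d : nat) (e : 'I_d -> 'cV[R[i]]_d)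
  (x : 'cV[R[i]]_d) : 'cV[R]_(3 * d - 2) :=
  \col_m sqmod (cinner x (meas_vec e m)).

From HB Require Import structures.
From mathcomp Require Import all_boot all_order all_algebra.
From mathcomp Require Import complex.
From mathcomp Require Import reals.
From mathcomp Require Import ring zify.
From Stdlib Require Import ClassicalEpsilon.
Set Implicit Arguments.
Unset Strict Implicit.
Unset Printing Implicit Defensive.
Import Order.TTheory GRing.Theory Num.Theory.
Local Open Scope ring_scope.

(* The measurements are invariant under a unimodular factor, so it suffices
   to show that [y = (<e_1,x>/|<e_1,x>|) x], the representative of the orbit
   of [x] whose first coordinate [y_1 = |<x,e_1>|] is a positive real, is
   determined by them.  The first three families of measurements give
   [|y_j|], [|y_j - y_(j+1)|] and [|y_j + i y_(j+1)|], from which polarization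
   recovers [y_j conj(y_(j+1))]; since [y_j != 0], each coordinate determines
   the next one, starting from [y_1 = sqrt(A(x)_1)]. *)

Lemma exists_factor_on (A B T : Type) (P : A -> Prop) (g : A -> B) (h : A -> T) :
  inhabited T -> (forall a a', P a -> P a' -> g a = g a' -> h a = h a') ->
  exists F : B -> T, forall a, P a -> F (g a) = h a.
Proof.
move=> inhT hg.
pose fiber b t := exists2 a, P a & g a = b /\ h a = t.
exists (fun b => epsilon inhT (fiber b)) => a Pa.
have [a' Pa' [ga' <-]] : fiber (g a) (epsilon inhT (fiber (g a))).
  by apply: epsilon_spec; exists (h a), a.
by apply: hg.
Qed.

Section ComplexPolarization.
Variable C : numClosedFieldType.
Implicit Types a b z : C.

Lemma polarization a b :
  a * b^* *+ 2 = `|a| ^+ 2 + `|b| ^+ 2 - `|a - b| ^+ 2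
                 + 'i * (`|a + 'i * b| ^+ 2 - `|a| ^+ 2 - `|b| ^+ 2).
Proof.
rewrite !normCK !(rmorphB, rmorphD, rmorphM) /= conjCi.
have sqri : 'i * 'i = -1 :> C by rewrite -expr2 sqrCi.
apply/eqP; rewrite -subr_eq0; apply/eqP.
transitivity (('i * 'i + 1) * (b * b^* * 'i + a * b^* - b * a^*)); first ring.
by rewrite sqri addNr mul0r.
Qed.

Lemma mul_conj_eq_of_norms a b a' b' :
  `|a| = `|a'| -> `|b| = `|b'| -> `|a - b| = `|a' - b'| ->
  `|a + 'i * b| = `|a' + 'i * b'| -> a * b^* = a' * b'^*.
Proof.
move=> ha hb hab habi.
have two_neq0 : 2%:R != 0 :> C by rewrite pnatr_eq0.
apply: (mulIf two_neq0); rewrite !mulr_natr.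
by rewrite !polarization ha hb hab habi.
Qed.

Lemma norm_phase z : z != 0 -> `|z / `|z| | = 1.
Proof. by move=> z0; rewrite normf_div normr_id divff ?normr_eq0. Qed.

Lemma phase_mul_conj z : z != 0 -> z / `|z| * z^* = `|z|.
Proof. by move=> z0; rewrite mulrAC -normCK expr2 mulfK ?normr_eq0. Qed.

End ComplexPolarization.

Section InnerProduct.
Variables (R : rcfType) (d : nat).
Implicit Types u v w : 'cV[R[i]]_d.

Lemma cinnerBl u v w : cinner (u - v) w = cinner u w - cinner v w.
Proof. by rewrite /cinner -sumrB; apply: eq_bigr => k _; rewrite !mxE mulrBl. Qed.

Lemma cinnerBr u v w : cinner u (v - w) = cinner u v - cinner u w.
Proof.
rewrite /cinner -sumrB; apply: eq_bigr => k _.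
by rewrite !mxE rmorphB mulrBr.
Qed.

Lemma cinnerZl a u w : cinner (a *: u) w = a * cinner u w.
Proof. by rewrite /cinner mulr_sumr; apply: eq_bigr => k _; rewrite !mxE mulrA. Qed.

Lemma cinnerZr a u w : cinner u (a *: w) = a^* * cinner u w.
Proof.
rewrite /cinner mulr_sumr; apply: eq_bigr => k _.
by rewrite !mxE rmorphM mulrCA.
Qed.

Lemma cinnerC u w : cinner u w = (cinner w u)^*.
Proof.
rewrite /cinner rmorph_sum; apply: eq_bigr => k _.
by rewrite rmorphM /= conjCK mulrC.
Qed.

(* Orthonormality says [E^T Ec = 1] for the matrices [E], [Ec] whose columns
   are the [e j] and their conjugates; a one-sided inverse of a square matrix
   is two-sided, so [w^T Ec = 0] forces [w = 0]. *)
Lemma orthonormal_complete (e : 'I_d -> 'cV[R[i]]_d) w :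
  orthonormal_basis e -> (forall j, cinner w (e j) = 0) -> w = 0.
Proof.
move=> he w_perp.
pose E : 'M[R[i]]_d := \matrix_(i, j) e j i 0.
pose Ec : 'M[R[i]]_d := \matrix_(i, j) (e j i 0)^*.
have EEc : E^T *m Ec = 1%:M.
  apply/matrixP => j k; rewrite !mxE -he /cinner.
  by apply: eq_bigr => m _; rewrite !mxE.
have wEc : w^T *m Ec = 0.
  apply/matrixP => j k; rewrite [RHS]mxE -(w_perp k) mxE.
  by apply: eq_bigr => m _; rewrite !mxE (ord1 j).
apply: trmx_inj; rewrite trmx0 -[w^T]mulmx1 -(mulmx1C EEc).
by rewrite mulmxA wEc mul0mx.
Qed.

End InnerProduct.

Section Measurements.
Variables (R : rcfType) (d : nat) (e : 'I_d -> 'cV[R[i]]_d).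
Implicit Types x y : 'cV[R[i]]_d.

(* The [E] of [meas_vec]: indices out of range give [0]. *)
Definition basis_at (n : nat) : 'cV[R[i]]_d :=
  if insub n is Some j then e j else 0.

Lemma basis_atE n (hn : (n < d)%N) : basis_at n = e (Ordinal hn).
Proof. by rewrite /basis_at insubT. Qed.

Lemma meas_vec_basis n : (n < d)%N -> exists m, meas_vec e m = basis_at n.
Proof.
move=> hn; have hm : (n < 3 * d - 2)%N by lia.
by exists (Ordinal hm); rewrite /meas_vec /= hn.
Qed.

Lemma meas_vec_sub n : (n.+1 < d)%N ->
  exists m, meas_vec e m = basis_at n - basis_at n.+1.
Proof.
move=> hn; have hm : (d + n < 3 * d - 2)%N by lia.
exists (Ordinal hm); rewrite /meas_vec /=.
have -> : (d + n < d)%N = false by lia.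
have -> : (d + n < 2 * d - 1)%N = true by lia.
by have -> : (d + n - d)%N = n by lia.
Qed.

Lemma meas_vec_subi n : (n.+1 < d)%N ->
  exists m, meas_vec e m = basis_at n - 'i *: basis_at n.+1.
Proof.
move=> hn; have hm : (2 * d - 1 + n < 3 * d - 2)%N by lia.
exists (Ordinal hm); rewrite /meas_vec /=.
have -> : (2 * d - 1 + n < d)%N = false by lia.
have -> : (2 * d - 1 + n < 2 * d - 1)%N = false by lia.
by have -> : (2 * d - 1 + n - (2 * d - 1))%N = n by lia.
Qed.

Lemma sqmodE (z : R[i]) : (sqmod z)%:C%C = `|z| ^+ 2.
Proof. by rewrite normc_def -rmorphXn /= sqr_sqrtr // addr_ge0 ?sqr_ge0. Qed.

Lemma meas_map_eqP x x' :
  meas_map e x = meas_map e x' <->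
  forall m, `|cinner x (meas_vec e m)| = `|cinner x' (meas_vec e m)|.
Proof.
split=> [hx m | hx].
  have := congr1 (fun M : 'cV[R]_(3 * d - 2) => (M m 0)%:C%C) hx.
  by rewrite !mxE !sqmodE => /eqP; rewrite eqrXn2 // => /eqP.
apply/matrixP => m k; rewrite !mxE.
by apply: (@complexI R); rewrite !sqmodE hx.
Qed.

Lemma meas_mapZ (q : R[i]) x : `|q| = 1 -> meas_map e (q *: x) = meas_map e x.
Proof. by move=> q1; apply/meas_map_eqP => m; rewrite cinnerZl normrM q1 mul1r. Qed.

Variable hd : (0 < d)%N.
Hypothesis he : orthonormal_basis e.

Let e0 := e (Ordinal hd).

Lemma eq_of_meas_map_pos y y' : full e y ->
  0 < cinner y e0 -> 0 < cinner y' e0 -> meas_map e y = meas_map e y' -> y = y'.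
Proof.
move=> fy y0 y'0 /meas_map_eqP hm.
have coord n : (n < d)%N -> cinner y (basis_at n) = cinner y' (basis_at n).
  elim: n => [|n IHn] hn.
    have [m Em] := meas_vec_basis hd.
    have := hm m; rewrite Em (basis_atE hd).
    by rewrite (gtr0_norm y0) (gtr0_norm y'0).
  have [m1 E1] := meas_vec_basis (ltnW hn).
  have [m2 E2] := meas_vec_basis hn.
  have [m3 E3] := meas_vec_sub hn.
  have [m4 E4] := meas_vec_subi hn.
  have prod : cinner y (basis_at n) * (cinner y (basis_at n.+1))^* =
              cinner y' (basis_at n) * (cinner y' (basis_at n.+1))^*.
    apply: mul_conj_eq_of_norms.
    - by rewrite -E1.
    - by rewrite -E2.
    - by have := hm m3; rewrite E3 !cinnerBr.
    - by have := hm m4; rewrite E4 !cinnerBr !cinnerZr conjCi !mulNr !opprK.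
  have yn0 : cinner y (basis_at n) != 0 by rewrite (basis_atE (ltnW hn)).
  apply: (can_inj conjCK); apply: (mulfI yn0).
  by rewrite prod (IHn (ltnW hn)).
apply/eqP; rewrite -subr_eq0; apply/eqP; apply: (orthonormal_complete he).
by case=> n hn; rewrite cinnerBl -(basis_atE hn) coord ?subrr.
Qed.

Definition normalize x : 'cV[R[i]]_d :=
  (cinner e0 x / `|cinner e0 x|) *: x.

Lemma normalize_spec x : full e x ->
  [/\ `|cinner e0 x / `|cinner e0 x| | = 1,
      full e (normalize x) & 0 < cinner (normalize x) e0].
Proof.
move=> fx; have x00 : cinner e0 x != 0 by rewrite cinnerC conjC_eq0; apply: fx.
have q1 := norm_phase x00.
have q0 : cinner e0 x / `|cinner e0 x| != 0 by rewrite -normr_eq0 q1 oner_eq0.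
split=> // [j|]; rewrite cinnerZl.
  by rewrite mulf_neq0 //; apply: fx.
by rewrite [cinner x e0]cinnerC phase_mul_conj // normr_gt0.
Qed.

Lemma normalize_inj x x' : full e x -> full e x' ->
  meas_map e x = meas_map e x' -> normalize x = normalize x'.
Proof.
move=> /normalize_spec [q1 fy y0] /normalize_spec [q'1 _ y'0] hm.
by apply: eq_of_meas_map_pos; rewrite // !meas_mapZ.
Qed.

End Measurements.

Theorem mainTheorem2 (R : realType) (d : nat) (hd : (1 <= d)%N)
  (e : 'I_d -> 'cV[R[i]]_d) (he : orthonormal_basis e) :
  exists F : 'cV[R]_(3 * d - 2) -> 'cV[R[i]]_d,
    forall x : 'cV[R[i]]_d, full e x ->
      F (meas_map e x) =
        (cinner (e (Ordinal hd)) x / `|cinner (e (Ordinal hd)) x|) *: x.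
Proof.
apply: (exists_factor_on (h := normalize e hd)); first exact: inhabits 0.
exact: normalize_inj.
Qed.
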